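(* Let $m$ be a nonnegative integer and $F$ a distribution function with finite $m$-th absolute moment. In $(\mathbb R_m[\mathrm D],\circ)$, $$\mathsf L_{F,m}^{-1}=\sum_{k=0}^m(\mathrm{Id}-\mathsf L_{F,m})^{\circ k}=\sum_{j=0}^m(-1)^j\mathsf L_{F,m}^{\circ j}\sum_{k=j}^m\binom{k}{j}.$$
   Context: $(\mathbb R_m[\mathrm D],\circ)$ is the ring of polynomials in $\mathrm D$ of degree at most $m$ with multiplication of polynomials modulo $\mathrm D^{m+1}$; $\mathrm{Id}$ is its unit $\mathrm D^0$. For $T$ in this ring, $T^{\circ0}=\mathrm{Id}$ and $T^{\circ k}=T\circ T^{\circ(k-1)}$. $\mu_{F,k}=\int x^k\,dF(x)$ and $\mathsf L_{F,m}=\sum_{k=0}^m\frac{(-1)^k}{k!}\mu_{F,k}\mathrm D^k$. *)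

From HB Require Import structures.
From mathcomp Require Import all_boot all_order all_algebra.
From mathcomp Require Import all_classical all_reals all_analysis.
Set Implicit Arguments. Unset Strict Implicit. Unset Printing Implicit Defensive.
Import Order.TTheory GRing.Theory Num.Theory.
Local Open Scope ring_scope.

(* The ring (R_m[D], o): elements are polynomials in D (represented by {poly R},
   the indeterminate 'X playing the role of D) of degree at most m; the product
   is the polynomial product truncated modulo D^(m+1). *)
Definition tmul {R : comRingType} (m : nat) (p q : {poly R}) : {poly R} :=
  \poly_(i < m.+1) (p * q)`_i.

Definition tpow {R : comRingType} (m : nat) (T : {poly R}) (k : nat) : {poly R} :=
  iter k (tmul m T) 1.

(* Distribution functions = nondecreasing right-continuous functions with limits
   0 at -oo and 1 at +oo: the library type [cumulativeBounded 0 1].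
   dF is the Lebesgue-Stieltjes measure of F. *)
Definition dF {R : realType} (F : cumulativeBounded (0:R) (1:R)) :=
  lebesgue_stieltjes_measure F.

Definition moment {R : realType} (F : cumulativeBounded (0:R) (1:R)) (k : nat) : R :=
  Rintegral (dF F) setT (fun x => x ^+ k).

Definition LF {R : realType} (F : cumulativeBounded (0:R) (1:R)) (m : nat) : {poly R} :=
  \poly_(k < m.+1) ((-1) ^+ k / (k`!)%:R * moment F k).

From HB Require Import structures.
From mathcomp Require Import all_boot all_order all_algebra.
From mathcomp Require Import all_classical all_reals all_analysis.
Import Order.TTheory GRing.Theory Num.Theory.
Local Open Scope ring_scope.

(* Since dF is a probability measure, mu_0 = 1, so N := Id - L has zero constant
   term and N^(m+1) vanishes modulo D^(m+1).  Hence the truncated geometric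
   series sum_(k <= m) N^k inverts 1 - N = L, and expanding each (1 - L)^k by
   the binomial theorem and exchanging the sums gives the second formula. *)

Lemma sum_binomial_lower (n j : nat) :
  (\sum_(k < n) 'C(k, j) = \sum_(j <= k < n) 'C(k, j))%N.
Proof.
rewrite big_geq_mkord [RHS]big_mkcond /=; apply: eq_bigr => k _.
by case: leqP => // /bin_small ->.
Qed.

Lemma sum_exp1B (R : comPzRingType) (x : R) (n : nat) :
  \sum_(k < n) (1 - x) ^+ k = \sum_(j < n) (- x) ^+ j *+ \sum_(j <= k < n) 'C(k, j).
Proof.
have expand k : (k < n)%N ->
    (1 - x) ^+ k = \sum_(j < n) (- x) ^+ j *+ 'C(k, j).
  move=> lt_kn; rewrite addrC exprD1n (big_ord_widen n (fun j => (- x) ^+ j *+ 'C(k, j))) //.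
  rewrite big_mkcond /=; apply: eq_bigr => j _.
  by case: ltnP => // /bin_small ->.
under eq_bigr => k _ do rewrite (expand k (ltn_ord k)).
rewrite exchange_big /=; apply: eq_bigr => j _.
by rewrite sumrMnr sum_binomial_lower.
Qed.

Section TruncatedPolynomials.
Variables (R : comNzRingType) (m : nat).
Implicit Types p q : {poly R}.

Lemma tmulE p q : tmul m p q = take_poly m.+1 (p * q).
Proof. by []. Qed.

Lemma tmulC p q : tmul m p q = tmul m q p.
Proof. by rewrite !tmulE mulrC. Qed.

Lemma take_polyMr n p q : take_poly n (p * take_poly n q) = take_poly n (p * q).
Proof.
rewrite -{2}(poly_take_drop n q) mulrDr mulrA take_polyD take_polyMXn_0.
by rewrite addr0.
Qed.

Lemma tpowE p k : tpow m p k = take_poly m.+1 (p ^+ k).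
Proof.
elim: k => [|k IHk]; first by rewrite take_poly_id // size_poly1.
by rewrite /tpow iterS -/(tpow m p k) IHk tmulE take_polyMr -exprS.
Qed.

Lemma take_poly_exp_coef0 n p : p`_0 = 0 -> take_poly n (p ^+ n) = 0.
Proof.
move=> p0; have take1 : take_poly 1 p = 0.
  by apply/polyP => i; rewrite coef_take_poly coef0; case: i.
rewrite -(poly_take_drop 1 p) take1 add0r exprMn -exprM mul1n.
exact: take_polyMXn_0.
Qed.

Lemma tmul_geometric q : q`_0 = 0 ->
  tmul m (1 - q) (\sum_(k < m.+1) tpow m q k) = 1.
Proof.
move=> q0; under eq_bigr do rewrite tpowE.
rewrite -take_poly_sum tmulE take_polyMr.
have -> : (1 - q) * \sum_(k < m.+1) q ^+ k = 1 - q ^+ m.+1.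
  by rewrite -opprB mulNr -subrX1 opprB.
rewrite linearB /= take_poly_exp_coef0 // subr0.
by rewrite take_poly_id // size_poly1.
Qed.

Lemma sum_tpow1B (L : {poly R}) : \sum_(k < m.+1) tpow m (1 - L) k =
  \sum_(j < m.+1) (((-1) ^+ j * (\sum_(j <= k < m.+1) 'C(k, j))%:R) *: tpow m L j).
Proof.
under eq_bigr do rewrite tpowE.
rewrite -take_poly_sum sum_exp1B take_poly_sum; apply: eq_bigr => j _.
rewrite tpowE -take_polyZ mulrC -scalerA scaler_nat [(- L) ^+ _]exprNn.
by rewrite -mul_polyC rmorphXn rmorphN1.
Qed.

End TruncatedPolynomials.

Lemma moment0 (R : realType) (F : cumulativeBounded (0:R) (1:R)) : moment F 0 = 1.
Proof.
rewrite /moment; under eq_fun do rewrite expr0.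
rewrite Rintegral_cst // mul1r.
have dF_setT : dF F setT = 1%E.
  exact: (@probability_setT _ _ _ (lebesgue_stieltjes_measure F)).
exact: (congr1 fine dF_setT).
Qed.

Lemma LF_coef0 (R : realType) (F : cumulativeBounded (0:R) (1:R)) m : (LF F m)`_0 = 1.
Proof. by rewrite coef_poly /= expr0 moment0 fact0 divr1 mulr1. Qed.

Theorem proposition2p1p3 (R : realType) (m : nat)
    (F : cumulativeBounded (0:R) (1:R))
    (hF : (\int[dF F]_x ((`|x| ^+ m)%:E) < +oo)%E) :
  let L := LF F m in
  let S := \sum_(k < m.+1) tpow m (1 - L) k in
  [/\ tmul m L S = 1, tmul m S L = 1 &
      S = \sum_(j < m.+1)
            (((-1) ^+ j * (\sum_(j <= k < m.+1) 'C(k, j))%:R) *: tpow m L j)].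
Proof.
move=> L S.
have coef0_1BL : (1 - L)`_0 = 0 by rewrite coefB coef1 LF_coef0 subrr.
have mulLS : tmul m L S = 1 by rewrite -{1}(subKr 1 L) tmul_geometric.
split => //; first by rewrite tmulC.
exact: sum_tpow1B.
Qed.
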